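(* Every finite non-empty word $W$ over a $2$-letter alphabet satisfies $r(W)=1$, i.e., $W$ has exactly one square-free reduct.
   Context: A square is a finite non-empty word of the form $XX$. A word is square-free if it has no factor that is a square. If a word has the form $W=UXXV$ with $X$ non-empty, replacing it by $UXV$ is called a square reduction. A reduct of $W$ is any square-free word obtainable from $W$ by a finite sequence (possibly empty) of square reductions. $r(W)$ denotes the number of distinct reducts of $W$. *)

From mathcomp Require Import all_boot.
Set Implicit Arguments. Unset Strict Implicit. Unset Printing Implicit Defensive.

Definition is_square (T : eqType) (w : seq T) : Prop :=
  exists x : seq T, x <> [::] /\ w = x ++ x.

Definition square_free (T : eqType) (w : seq T) : Prop :=
  forall u x v : seq T, x <> [::] -> w <> u ++ x ++ x ++ v.

Definition square_reduction (T : eqType) (w w' : seq T) : Prop :=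
  exists u x v : seq T, x <> [::] /\ w = u ++ x ++ x ++ v /\ w' = u ++ x ++ v.

Inductive reduces (T : eqType) : seq T -> seq T -> Prop :=
| reduces_refl w : reduces w w
| reduces_step w w' w'' : square_reduction w w' -> reduces w' w'' -> reduces w w''.

Definition is_reduct (T : eqType) (w r : seq T) : Prop :=
  reduces w r /\ square_free r.

(* A square reduction U X X V ~> U X V keeps the first letter, the last letter
   and the set of letters of a word.  A square-free word has no two equal
   adjacent letters, so over a two-letter alphabet it alternates and, avoiding
   the square abab, is one of a, ab, aba.  Such a word is determined by its
   first letter, last letter and set of letters, hence all reducts of W agree;
   one exists because reductions shorten the word. *)

From Stdlib Require Import Classical.
From mathcomp Require Import all_boot.

Set Implicit Arguments.
Unset Strict Implicit.
Unset Printing Implicit Defensive.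

Section Reductions.
Variable T : eqType.
Implicit Types (u v w x : seq T) (a b : T).

Lemma not_square_free w :
  ~ square_free w -> exists u x v, x <> [::] /\ w = u ++ x ++ x ++ v.
Proof.
move=> not_sf; apply: NNPP => no_square; apply: not_sf => u x v x0 Ew.
by apply: no_square; exists u, x, v.
Qed.

Lemma eq_mem_nil w : w =i [::] -> w = [::].
Proof. by case: w => // a w /(_ a); rewrite mem_head. Qed.

Lemma square_free_adjacent_neq u a b v : square_free (u ++ a :: b :: v) -> a != b.
Proof. by move=> sf; apply/eqP=> ab; subst b; apply: (sf u [:: a] v). Qed.

Lemma square_reduction_size w w' : square_reduction w w' -> size w' < size w.
Proof.
case=> u [x [v [x0 [-> ->]]]]; case: x x0 => [//|a x] _.
by rewrite !size_cat ltn_add2l -[X in X < _]add0n ltn_add2r.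
Qed.

Lemma square_reduction_inv d w w' : square_reduction w w' ->
  [/\ head d w' = head d w, last d w' = last d w & w' =i w].
Proof.
case=> u [x [v [x0 [-> ->]]]]; case: x x0 => [//|a x] _; split.
- by case: u.
- by rewrite !last_cat.
- by move=> c; rewrite !mem_cat; case: (c \in a :: x); rewrite ?orbT.
Qed.

Lemma reduces_inv d w w' : reduces w w' ->
  [/\ head d w' = head d w, last d w' = last d w & w' =i w].
Proof.
elim=> {w w'} [//|w w' w'' red _ [h' l' m']].
have [h l m] := square_reduction_inv d red.
by split; [rewrite h' h | rewrite l' l | move=> c; rewrite m' m].
Qed.

Lemma exists_reduct w : exists r, is_reduct w r.
Proof.
elim: {w}_.+1 {-2}w (ltnSn (size w)) => // n IH w w_le_n.
have [sf | /not_square_free [u [x [v [x0 Ew]]]]] := classic (square_free w).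
  by exists w; split=> //; apply: reduces_refl.
have red : square_reduction w (u ++ x ++ v) by exists u, x, v.
have [r [wr sfr]] := IH _ (leq_trans (square_reduction_size red) w_le_n).
by exists r; split=> //; apply: reduces_step red wr.
Qed.

End Reductions.

Section TwoLetters.
Variables (T : finType) (card2 : #|T| = 2).
Implicit Types (r s : seq T) (a b c : T).

Lemma card2_neq_neq_eq a b c : a != b -> b != c -> a = c.
Proof.
move=> ab bc; apply/eqP/negPn/negP => ac.
have /card_uniqP : uniq [:: a; b; c] by rewrite /= !inE negb_or ab ac bc.
by move: (max_card (mem [:: a; b; c])); rewrite card2 => /[swap] ->.
Qed.

Lemma square_free_card2 r : square_free r -> r != [::] ->
  exists a b, r = [:: a] \/ a != b /\ (r = [:: a; b] \/ r = [:: a; b; a]).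
Proof.
case: r => [//|a [|b [|c [|d s]]]] sf _.
- by exists a, a; left.
- have ab := square_free_adjacent_neq (u := [::]) sf.
  by exists a, b; right; split; [|left].
- have ab := square_free_adjacent_neq (u := [::]) sf.
  have bc := square_free_adjacent_neq (u := [:: a]) sf.
  by exists a, b; right; split; [|right; rewrite (card2_neq_neq_eq ab bc)].
- have ab := square_free_adjacent_neq (u := [::]) sf.
  have bc := square_free_adjacent_neq (u := [:: a]) sf.
  have cd := square_free_adjacent_neq (u := [:: a; b]) sf.
  rewrite -(card2_neq_neq_eq ab bc) -(card2_neq_neq_eq bc cd) in sf.
  by case: (sf [::] [:: a; b] s).
Qed.

Lemma square_free_card2_eq d r s : square_free r -> square_free s ->
  head d r = head d s -> last d r = last d s -> r =i s -> r = s.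
Proof.
move=> sfr sfs hrs lrs mrs.
have [r0 | r0] := eqVneq r [::].
  by rewrite r0; apply/esym/eq_mem_nil => c; rewrite -mrs r0.
have s0 : s != [::].
  by apply: contra_neq r0 => s0; apply: eq_mem_nil => c; rewrite mrs s0.
move: hrs lrs mrs.
have [a [b [-> | [ab [-> | ->]]]]] := square_free_card2 sfr r0;
have [a' [b' [-> | [ab' [-> | ->]]]]] := square_free_card2 sfs s0;
  move=> /= ha hl mrs; subst => //.
all: try by rewrite eqxx in ab.
all: try by rewrite eqxx in ab'.
- by move: (mrs b'); rewrite !inE eqxx orbT eq_sym (negbTE ab').
- by move: (mrs b); rewrite !inE eqxx orbT eq_sym (negbTE ab).
- by rewrite eq_sym in ab; rewrite (card2_neq_neq_eq ab ab').
Qed.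

End TwoLetters.

Theorem proposition2p1 (T : finType) (hT : #|T| = 2) (W : seq T) (hW : W <> [::]) :
  exists r : seq T, is_reduct W r /\ forall r' : seq T, is_reduct W r' -> r' = r.
Proof.
have [r [Wr sfr]] := exists_reduct W.
exists r; split=> // r' [Wr' sfr'].
case: W hW Wr Wr' => // a W _ Wr Wr'.
have [hr lr mr] := reduces_inv a Wr; have [hr' lr' mr'] := reduces_inv a Wr'.
apply: (square_free_card2_eq hT (d := a)) => //.
- by rewrite hr hr'.
- by rewrite lr lr'.
- by move=> c; rewrite mr mr'.
Qed.
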